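(* An algebra $(A,\circ,-,\sqcup)$ is a minus-algebra with override if and only if it satisfies all the defining laws of a minus-algebra with override except the quasi-identity $s-x=t-x\ \&\ x\circ s=x\circ t\Rightarrow s=t$, together with the identity $x=(y\circ x)\sqcup(x-y)$. Hence the class of minus-algebras with override is a finitely based variety, and so is the class of minus-semigroups with override (obtained by further adding an associative operation $\cdot$ and the identity $s(t-u)=st-su$).
   Context: A minus-algebra $(A,\circ,-)$ satisfies: $x\circ y=y-(y-x)$; $(A,\circ)$ is a right normal band (semigroup with $x\circ x=x$, $(x\circ y)\circ z=(y\circ x)\circ z$); there is an element $0$ with $x-x=0$ for all $x$; $x\circ0=0\circ x=0$; $(x-y)\circ x=x-y$; $(x-y)\circ y=0$; $(x-y)\circ z=(x\circ z)-y$; and the quasi-identity $s-x=t-x\ \&\ x\circ s=x\circ t\Rightarrow s=t$. A minus-algebra with override is a minus-algebra with a binary operation $\sqcup$ satisfying $(x\sqcup y)-x=y-x$ and $x\circ(x\sqcup y)=x$. A minus-semigroup with override is a minus-algebra with override with an associative operation $\cdot$ (juxtaposition) satisfying $s(t-u)=st-su$. *)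

Section MinusAlgebra.
Variable A : Type.
Variables (circ minus : A -> A -> A).

Definition right_normal_band : Prop :=
  (forall x y z, circ (circ x y) z = circ x (circ y z)) /\
  (forall x, circ x x = x) /\
  (forall x y z, circ (circ x y) z = circ (circ y x) z).

Definition minus_algebra_laws : Prop :=
  (forall x y, circ x y = minus y (minus y x)) /\
  right_normal_band /\
  (exists z : A,
     (forall x, minus x x = z) /\
     (forall x, circ x z = z /\ circ z x = z) /\
     (forall x y, circ (minus x y) x = minus x y) /\
     (forall x y, circ (minus x y) y = z) /\
     (forall x y w, circ (minus x y) w = minus (circ x w) y)).

Definition minus_quasi_identity : Prop :=
  forall s t x, minus s x = minus t x -> circ x s = circ x t -> s = t.

Definition minus_algebra : Prop := minus_algebra_laws /\ minus_quasi_identity.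

Variable join : A -> A -> A.

Definition override_laws : Prop :=
  (forall x y, minus (join x y) x = minus y x) /\
  (forall x y, circ x (join x y) = x).

Definition minus_algebra_with_override : Prop :=
  minus_algebra /\ override_laws.

Definition override_decomposition : Prop :=
  forall x y, x = join (circ y x) (minus x y).

Variable mul : A -> A -> A.

Definition minus_semigroup_laws : Prop :=
  (forall s t u, mul (mul s t) u = mul s (mul t u)) /\
  (forall s t u, mul s (minus t u) = minus (mul s t) (mul s u)).

Definition minus_semigroup_with_override : Prop :=
  minus_algebra_with_override /\ minus_semigroup_laws.

End MinusAlgebra.


(* With a := y∘x and b := x - y we have x - a = b and a∘x = a∘(a ⊔ b) = a,
   while a∘b = 0 makes b - a = b = (a ⊔ b) - a; the quasi-identity with
   witness a then gives x = a ⊔ b.  Conversely, the identity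
   s = (x∘s) ⊔ (s - x) recovers s from s - x and x∘s, which is exactly the
   quasi-identity. *)

Section MinusAlgebraFacts.

Variables (A : Type) (circ minus : A -> A -> A) (zero : A).

Hypothesis circ_def : forall x y, circ x y = minus y (minus y x).
Hypothesis circA : forall x y z, circ (circ x y) z = circ x (circ y z).
Hypothesis circxx : forall x, circ x x = x.
Hypothesis circ_rnormal : forall x y z, circ (circ x y) z = circ (circ y x) z.
Hypothesis minusxx : forall x, minus x x = zero.
Hypothesis circx0 : forall x, circ x zero = zero.
Hypothesis circ0x : forall x, circ zero x = zero.
Hypothesis circ_minus_l : forall x y, circ (minus x y) x = minus x y.
Hypothesis circ_minus_r : forall x y, circ (minus x y) y = zero.

Lemma circ_eq0_sym p q : circ p q = zero -> circ q p = zero.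
Proof.
  intros Hpq.
  rewrite <- (circxx p), <- circA, circ_rnormal, Hpq.
  apply circ0x.
Qed.

Lemma minus_circ_r x y : minus x (circ y x) = minus x y.
Proof. rewrite circ_def, <- circ_def. apply circ_minus_l. Qed.

Lemma circ_circ_minus x y : circ (circ y x) (minus x y) = zero.
Proof.
  rewrite circ_rnormal, circA, (circ_eq0_sym _ _ (circ_minus_r x y)).
  apply circx0.
Qed.

Hypothesis quasi : minus_quasi_identity A circ minus.

Lemma minus_circ_eq0 p q : circ q p = zero -> minus p q = p.
Proof.
  intros Hqp. apply (quasi _ _ (minus p q)).
  - rewrite minusxx, <- circ_def, Hqp. reflexivity.
  - rewrite circxx, circ_minus_l. reflexivity.
Qed.

Variable join : A -> A -> A.
Hypothesis override : override_laws A circ minus join.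

Lemma override_decomposition_from_laws : override_decomposition A circ minus join.
Proof.
  destruct override as [minus_join circ_join].
  intros x y. apply (quasi _ _ (circ y x)).
  - rewrite minus_join, minus_circ_r.
    symmetry. apply minus_circ_eq0, circ_circ_minus.
  - rewrite circ_join, circA, circxx. reflexivity.
Qed.

End MinusAlgebraFacts.

Lemma override_decomposition_of_minus_algebra (A : Type)
    (circ minus join : A -> A -> A) :
  minus_algebra_with_override A circ minus join ->
  override_decomposition A circ minus join.
Proof.
  intros [[[circ_def [[circA [circxx circ_rnormal]] [zero laws]]] quasi]
          override].
  destruct laws as [minusxx [circ0 [circ_minus_l [circ_minus_r _]]]].
  exact (override_decomposition_from_laws A circ minus zero circ_def circA circxx
           circ_rnormal minusxx (fun x => proj1 (circ0 x))
           (fun x => proj2 (circ0 x)) circ_minus_l circ_minus_r quasi join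
           override).
Qed.

Lemma quasi_identity_of_override_decomposition (A : Type)
    (circ minus join : A -> A -> A) :
  override_decomposition A circ minus join -> minus_quasi_identity A circ minus.
Proof.
  intros decomp s t x Hminus Hcirc.
  rewrite (decomp s x), (decomp t x), Hminus, Hcirc. reflexivity.
Qed.

Lemma minus_algebra_with_overrideE (A : Type) (circ minus join : A -> A -> A) :
  minus_algebra_with_override A circ minus join <->
  (minus_algebra_laws A circ minus /\ override_laws A circ minus join /\
   override_decomposition A circ minus join).
Proof.
  split.
  - intros Halg.
    pose proof (override_decomposition_of_minus_algebra A circ minus join Halg)
      as decomp.
    destruct Halg as [[laws _] override].
    exact (conj laws (conj override decomp)).
  - intros [laws [override decomp]].
    pose proof (quasi_identity_of_override_decomposition A circ minus join decomp)
      as quasi.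
    exact (conj (conj laws quasi) override).
Qed.

Theorem proposition5p4 :
  (forall (A : Type) (circ minus join : A -> A -> A),
     minus_algebra_with_override A circ minus join <->
     (minus_algebra_laws A circ minus /\ override_laws A circ minus join /\
      override_decomposition A circ minus join)) /\
  (forall (A : Type) (circ minus join mul : A -> A -> A),
     minus_semigroup_with_override A circ minus join mul <->
     (minus_algebra_laws A circ minus /\ override_laws A circ minus join /\
      override_decomposition A circ minus join /\
      minus_semigroup_laws A minus mul)).
Proof.
  split; [exact minus_algebra_with_overrideE |].
  intros A circ minus join mul.
  unfold minus_semigroup_with_override.
  pose proof (minus_algebra_with_overrideE A circ minus join).
  tauto.
Qed.
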